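(* Let $m\geq 15$ and $k\geq 1$ be integers and let $c(x)=1+\sum_{j\in\{1,2,3,7\}}(x^j+x^{m-j})\in\mathbb{F}_2[x]$. Then $\gcd(c(x^k),x^m-1)=1$ if and only if $\gcd(m,3k)=\gcd(m,5k)=\gcd(m,7k)=\gcd(m,k)$.
   Context: All polynomials are over $\mathbb{F}_2$. *)

From HB Require Import structures.
From mathcomp Require Import all_boot all_order all_algebra.
Set Implicit Arguments. Unset Strict Implicit. Unset Printing Implicit Defensive.
Import GRing.Theory.
Local Open Scope ring_scope.

Definition cpoly (m : nat) : {poly 'F_2} :=
  1 + \sum_(j <- [:: 1%N; 2%N; 3%N; 7%N]) ('X^j + 'X^(m - j)).

(* Write y = x^k and G_p(z) = 1 + z + ... + z^(p-1).  Since y^(m-j) = y^m y^(-j)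
   and y^m = x^(mk) = 1 modulo x^m - 1, multiplying c(y) by y^7 gives, in
   characteristic 2,
       y^7 c(y) = (1 + y^4 + y^5 + y^6) (x^(mk) - 1) + G_3(y)^2 G_5(y) G_7(y).
   As y^7 is coprime to x^m - 1, c(y) is coprime to x^m - 1 iff each of
   G_3(y), G_5(y), G_7(y) is.  For an odd p (more generally, p nonzero in the
   base field), G_p(y) is coprime to x^m - 1 iff gcd(m, pk) = gcd(m, k): the
   polynomial (y - 1) G_p(y) = x^(pk) - 1 shares with x^m - 1 exactly the factor
   x^gcd(m,pk) - 1, while y - 1 and G_p(y) are coprime because
   G_p(y) = p modulo y - 1. *)

From HB Require Import structures.
From mathcomp Require Import all_boot all_order all_algebra.
From mathcomp Require Import ring.
Import GRing.Theory.
Local Open Scope ring_scope.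

Definition geosum {R : pzRingType} (n : nat) (z : R) : R := \sum_(i < n) z ^+ i.

Lemma geosum_mod_sub1 (R : comPzRingType) (n : nat) (z : R) :
  geosum n z = (\sum_(i < n) geosum i z) * (z - 1) + n%:R.
Proof.
rewrite mulr_suml.
under eq_bigr => i _ do rewrite mulrC -subrX1.
by rewrite sumrB sumr_const card_ord subrK.
Qed.

Section Binomials.
Context {F : fieldType}.
Implicit Types (a b n : nat) (d : {poly F}).

Lemma dvdp_Xn_sub1 {a b} : (a %| b)%N -> ('X^a - 1 : {poly F}) %| 'X^b - 1.
Proof.
by case/dvdnP=> c ->; rewrite mulnC exprM [X in _ %| X]subrX1 dvdp_mulIl.
Qed.

(* A common divisor of x^a - 1 and x^b - 1 divides x^gcd(a,b) - 1
   (Bezout relation on the exponents). *)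
Lemma dvdp_Xn_sub1_gcdn {d a b} : (0 < a)%N ->
  d %| 'X^a - 1 -> d %| 'X^b - 1 -> d %| 'X^(gcdn a b) - 1.
Proof.
move=> a_gt0 da db; have [u v def_g _] := egcdnP b a_gt0.
have -> : ('X^(gcdn a b) - 1 : {poly F}) =
    ('X^(u * a) - 1) - 'X^(gcdn a b) * ('X^(v * b) - 1).
  by rewrite def_g exprD; ring.
rewrite dvdp_sub ?dvdp_mull //.
- exact: dvdp_trans da (dvdp_Xn_sub1 (dvdn_mull _ (dvdnn _))).
- exact: dvdp_trans db (dvdp_Xn_sub1 (dvdn_mull _ (dvdnn _))).
Qed.

Lemma dvdp_Xn_sub1E a b : (0 < b)%N ->
  (('X^a - 1 : {poly F}) %| 'X^b - 1) = (a %| b)%N.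
Proof.
move=> b_gt0; apply/idP/idP => [dab|]; last exact: dvdp_Xn_sub1.
have size_Xn_sub1 n : (0 < n)%N -> size ('X^n - 1 : {poly F}) = n.+1.
  by move=> n_gt0; rewrite -polyC1 size_XnsubC.
have [a0 | a_gt0] := posnP a.
  move: dab; rewrite a0 expr0 subrr dvd0p -size_poly_eq0 size_Xn_sub1 //.
have g_gt0 : (0 < gcdn b a)%N by rewrite gcdn_gt0 b_gt0.
have nz : ('X^(gcdn b a) - 1 : {poly F}) != 0.
  by rewrite -size_poly_eq0 size_Xn_sub1.
have := dvdp_leq nz (dvdp_Xn_sub1_gcdn b_gt0 dab (dvdpp _)).
rewrite !size_Xn_sub1 // ltnS => le_a_g.
have /eqP g_a : gcdn b a == a by rewrite eqn_leq le_a_g dvdn_leq ?dvdn_gcdr.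
by rewrite -g_a dvdn_gcdl.
Qed.

Lemma coprimep_Xn_Xn_sub1 n {m} : (0 < m)%N -> coprimep ('X^n : {poly F}) ('X^m - 1).
Proof.
move=> m_gt0; apply: coprimep_expl; rewrite coprimep_sym coprimepX.
by rewrite rootE !hornerE expr0n eqn0Ngt m_gt0 /= sub0r oppr_eq0 oner_eq0.
Qed.

End Binomials.

Section GeometricCriterion.
Variable F : fieldType.
Variables (p : nat) (p_neq0 : (p%:R : F) != 0).

(* Since G_p(z) = p modulo z - 1, the factors z - 1 and G_p(z) are coprime. *)
Lemma coprimep_sub1_geosum (z : {poly F}) : coprimep (z - 1) (geosum p z).
Proof.
rewrite geosum_mod_sub1 coprimep_addl_mul -polyC_natr -alg_polyC.
by rewrite coprimepZr // coprimep1.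
Qed.

Lemma coprimep_geosum_Xn_sub1 m k : (0 < m)%N -> (0 < k)%N ->
  coprimep (geosum p ('X^k : {poly F})) ('X^m - 1) <-> gcdn m (p * k) = gcdn m k.
Proof.
move=> m_gt0 k_gt0.
have pk_fact : ('X^k - 1) * geosum p ('X^k : {poly F}) = 'X^(p * k) - 1.
  by rewrite /geosum -subrX1 -exprM mulnC.
split=> [cop | eq_g].
- set g := gcdn m (p * k).
  have g_m : ('X^g - 1 : {poly F}) %| 'X^m - 1 by rewrite dvdp_Xn_sub1 ?dvdn_gcdl.
  have g_cop : coprimep ('X^g - 1) (geosum p ('X^k : {poly F})).
    by rewrite coprimep_sym (coprimep_dvdl g_m).
  have : ('X^g - 1 : {poly F}) %| 'X^k - 1.
    by rewrite -(Gauss_dvdpl _ g_cop) pk_fact dvdp_Xn_sub1 ?dvdn_gcdr.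
  rewrite dvdp_Xn_sub1E // => g_k; apply/eqP; rewrite eqn_dvd.
  by rewrite dvdn_gcd dvdn_gcdl g_k dvdn_gcd dvdn_gcdl dvdn_mull ?dvdn_gcdr.
- apply/coprimepP => d d_geo d_m.
  have d_pk : d %| 'X^(p * k) - 1 by rewrite -pk_fact dvdp_mull.
  have := dvdp_Xn_sub1_gcdn m_gt0 d_m d_pk; rewrite eq_g => d_g.
  have d_k : d %| 'X^k - 1 by apply: dvdp_trans d_g (dvdp_Xn_sub1 (dvdn_gcdr _ _)).
  by move/coprimepP: (coprimep_sub1_geosum 'X^k); apply.
Qed.

End GeometricCriterion.

(* In characteristic 2: G_3(y)^2 G_5(y) G_7(y) = 1 + y^4 + ... + y^10 + y^14;
   over the integers the two sides differ by twice an explicit polynomial. *)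
Lemma geosum_product_char2 (R : comPzRingType) (two0 : 2%:R = 0 :> R) (y : R) :
  geosum 3 y ^+ 2 * geosum 5 y * geosum 7 y =
  1 + y ^+ 4 + y ^+ 5 + y ^+ 6 + y ^+ 7 + y ^+ 8 + y ^+ 9 + y ^+ 10 + y ^+ 14.
Proof.
set rhs := (X in _ = X).
have -> : geosum 3 y ^+ 2 * geosum 5 y * geosum 7 y = rhs + 2%:R *
    (2%:R * y + 5%:R * y ^+ 2 + 9%:R * y ^+ 3 + 13%:R * y ^+ 4 + 17%:R * y ^+ 5
     + 20%:R * y ^+ 6 + 21%:R * y ^+ 7 + 20%:R * y ^+ 8 + 17%:R * y ^+ 9
     + 13%:R * y ^+ 10 + 9%:R * y ^+ 11 + 5%:R * y ^+ 12 + 2%:R * y ^+ 13).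
  by rewrite /rhs /geosum !big_ord_recr big_ord0 /=; ring.
by rewrite two0 mul0r addr0.
Qed.

Notation P2 := {poly 'F_2}.

Lemma cpoly_comp_Xn_factor (m k : nat) : (7 <= m)%N ->
  let y : P2 := 'X^k in
  y ^+ 7 * (cpoly m \Po y) = (1 + y ^+ 4 + y ^+ 5 + y ^+ 6) * ('X^(m * k) - 1)
    + geosum 3 y ^+ 2 * geosum 5 y * geosum 7 y.
Proof.
move=> m_ge7 y.
have two0 : 2%:R = 0 :> P2.
  by rewrite -polyC_natr (eqP (isT : 2%:R == 0 :> 'F_2)) polyC0.
rewrite geosum_product_char2 //.
set u := y ^+ (m - 7).
have y_m (j : nat) : (j <= 7)%N -> y ^+ (m - j) = u * y ^+ (7 - j).
  by move=> le_j7; rewrite -exprD; congr (_ ^+ _); rewrite addnBA // subnK.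
have u_y7 : u * y ^+ 7 = 'X^(m * k) by rewrite -exprD subnK // -exprM mulnC.
rewrite /cpoly !big_cons big_nil !comp_polyD !comp_Xn_poly comp_poly0.
rewrite -polyC1 comp_polyC polyC1 !y_m // -u_y7 !subnn !expr0.
ring.
Qed.

Lemma coprimep_cpoly_comp_Xn (m k : nat) : (7 <= m)%N ->
  coprimep (cpoly m \Po 'X^k) ('X^m - 1) =
  coprimep (geosum 3 ('X^k : P2) ^+ 2 * geosum 5 'X^k * geosum 7 'X^k) ('X^m - 1).
Proof.
move=> m_ge7; have m_gt0 : (0 < m)%N by apply: leq_trans m_ge7.
have [S def_S] : exists S, 'X^(m * k) - 1 = S * ('X^m - 1 : P2).
  by apply/dvdpP; rewrite dvdp_Xn_sub1 ?dvdn_mulr.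
have y7_cop : coprimep ('X^(7 * k) : P2) ('X^m - 1) by apply: coprimep_Xn_Xn_sub1.
rewrite -[LHS]andTb -y7_cop -coprimepMl mulnC exprM.
rewrite cpoly_comp_Xn_factor // def_S mulrA.
by rewrite coprimep_sym coprimep_addl_mul coprimep_sym.
Qed.

Theorem proposition7 (m k : nat) (hm : (15 <= m)%N) (hk : (1 <= k)%N) :
  coprimep (cpoly m \Po 'X^k) ('X^m - 1) <->
  [/\ gcdn m (3 * k) = gcdn m k, gcdn m (5 * k) = gcdn m k
    & gcdn m (7 * k) = gcdn m k].
Proof.
have m_ge7 : (7 <= m)%N by apply: leq_trans hm.
have m_gt0 : (0 < m)%N by apply: leq_trans m_ge7.
have crit p : (p%:R : 'F_2) != 0 ->
    coprimep (geosum p ('X^k : P2)) ('X^m - 1) <-> gcdn m (p * k) = gcdn m k.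
  by move=> p_neq0; apply: coprimep_geosum_Xn_sub1.
have c3 := crit 3%N isT; have c5 := crit 5%N isT; have c7 := crit 7%N isT.
rewrite coprimep_cpoly_comp_Xn // !coprimepMl andbb.
by split=> [/andP [/andP [/c3 ? /c5 ?] /c7 ?] | [/c3 -> /c5 -> /c7 ->]].
Qed.
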